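(* Let $L^x,L^y>0$, let $i\neq j$ be two boxes, each box $k\in\{i,j\}$ having center $(c^x_k,c^y_k)$, side lengths $(\ell^x_k,\ell^y_k)$ and given constants $lb^s_k>0$. Let $$Q^{lb}=\{(c_i,c_j,\ell_i,\ell_j)\in\mathbb{R}^8:\ \tfrac12\ell^s_k\le c^s_k\le L^s-\tfrac12\ell^s_k,\ \ell^s_k\ge lb^s_k\ \ \forall s\in\{x,y\},k\in\{i,j\}\}.$$ Consider binary variables $z^s_{p,q}$ for $s\in\{x,y\}$, $(p,q)\in\{(i,j),(j,i)\}$. Let $E$ be the set of $(c_i,c_j,\ell_i,\ell_j,z)\in\mathbb{R}^8\times\{0,1\}^4$ such that $(c_i,c_j,\ell_i,\ell_j)\in Q^{lb}$, $z$ is not identically zero, $z^s_{i,j}+z^s_{j,i}\le1$ for each $s$, $z^s_{p,q}=1$ implies $\mathscr{B}_p\leftarrow_s\mathscr{B}_q$, and whenever $z^s_{i,j}=z^s_{j,i}=0$ for a direction $s$ we have both $\mathscr{B}_i\not\leftarrow_s\mathscr{B}_j$ and $\mathscr{B}_j\not\leftarrow_s\mathscr{B}_i$. Then $E$ equals the set of $(c_i,c_j,\ell_i,\ell_j,z)$ satisfying \begin{align*} &\tfrac12\ell^s_p+lb^s_q z^s_{q,p}\le c^s_p\le L^s-\tfrac12\ell^s_p-lb^s_q z^s_{p,q} &&\forall s,\ (p,q)\in\{(i,j),(j,i)\},\\ &c^s_p+\tfrac12\ell^s_p\le c^s_q-\tfrac12\ell^s_q+L^s(1-z^s_{p,q})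 &&\forall s,\ (p,q)\in\{(i,j),(j,i)\},\\ &\ell^s_p\ge lb^s_p &&\forall s,\ p\in\{i,j\},\\ &z^x_{i,j}+z^x_{j,i}+z^y_{i,j}+z^y_{j,i}\ge1,\qquad z^s_{i,j}+z^s_{j,i}\le1 &&\forall s,\\ &z^s_{p,q}\in\{0,1\} &&\forall s,\ (p,q),\\ &c^s_p+\tfrac12\ell^s_p+L^s z^s_{p,q}\ge c^s_q-\tfrac12\ell^s_q+(lb^s_p+lb^s_q)(z^s_{i,j}+z^s_{j,i}) &&\forall s,\ (p,q)\in\{(i,j),(j,i)\}, \end{align*} where $s$ ranges over $\{x,y\}$.
   Context: Box $\mathscr{B}_p$ precedes $\mathscr{B}_q$ in direction $s$, written $\mathscr{B}_p\leftarrow_s\mathscr{B}_q$, if $c^s_p+\tfrac12\ell^s_p\le c^s_q-\tfrac12\ell^s_q$; $\mathscr{B}_p$ does not precede $\mathscr{B}_q$, written $\mathscr{B}_p\not\leftarrow_s\mathscr{B}_q$, if $c^s_p+\tfrac12\ell^s_p\ge c^s_q-\tfrac12\ell^s_q$. The set $E$ is the paper's embedding $\operatorname{Em}(Q^{lb},D^8,C^8)$: the eight branches of the refined disjunction $D^8$ are $(\mathscr{B}_i\leftarrow_y\mathscr{B}_j)\wedge(\mathscr{B}_i\not\leftarrow_x\mathscr{B}_j)\wedge(\mathscr{B}_j\not\leftarrow_x\mathscr{B}_i)$; $(\mathscr{B}_i\leftarrow_y\mathscr{B}_j)\wedge(\mathscr{B}_i\leftarrow_x\mathscr{B}_j)$;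 $(\mathscr{B}_i\leftarrow_x\mathscr{B}_j)\wedge(\mathscr{B}_i\not\leftarrow_y\mathscr{B}_j)\wedge(\mathscr{B}_j\not\leftarrow_y\mathscr{B}_i)$; $(\mathscr{B}_i\leftarrow_x\mathscr{B}_j)\wedge(\mathscr{B}_j\leftarrow_y\mathscr{B}_i)$; $(\mathscr{B}_j\leftarrow_y\mathscr{B}_i)\wedge(\mathscr{B}_i\not\leftarrow_x\mathscr{B}_j)\wedge(\mathscr{B}_j\not\leftarrow_x\mathscr{B}_i)$; $(\mathscr{B}_j\leftarrow_x\mathscr{B}_i)\wedge(\mathscr{B}_j\leftarrow_y\mathscr{B}_i)$; $(\mathscr{B}_j\leftarrow_x\mathscr{B}_i)\wedge(\mathscr{B}_i\not\leftarrow_y\mathscr{B}_j)\wedge(\mathscr{B}_j\not\leftarrow_y\mathscr{B}_i)$; $(\mathscr{B}_j\leftarrow_x\mathscr{B}_i)\wedge(\mathscr{B}_i\leftarrow_y\mathscr{B}_j)$, and each branch is encoded by the vector $z$ with $z^s_{p,q}=1$ exactly when the clause $\mathscr{B}_p\leftarrow_s\mathscr{B}_q$ appears in it. *)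

From Stdlib Require Import Reals Lra.
Open Scope R_scope.

Inductive dir : Set := DX | DY.
Inductive box : Set := Bi | Bj.

Definition other (p : box) : box := match p with Bi => Bj | Bj => Bi end.

(* Data: centers c k s, lengths l k s, binary variables z s p q
   (only p <> q, i.e. q = other p, is ever used). *)

Definition precedes (c l : box -> dir -> R) (s : dir) (p q : box) : Prop :=
  c p s + l p s / 2 <= c q s - l q s / 2.

Definition not_precedes (c l : box -> dir -> R) (s : dir) (p q : box) : Prop :=
  c p s + l p s / 2 >= c q s - l q s / 2.

Definition in_Qlb (L : dir -> R) (lb : box -> dir -> R) (c l : box -> dir -> R) : Prop :=
  forall (s : dir) (k : box),
    l k s / 2 <= c k s /\ c k s <= L s - l k s / 2 /\ l k s >= lb k s.

Definition is_binary (x : R) : Prop := x = 0 \/ x = 1.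

Definition in_E (L : dir -> R) (lb : box -> dir -> R) (c l : box -> dir -> R)
    (z : dir -> box -> box -> R) : Prop :=
  in_Qlb L lb c l /\
  (forall s p, is_binary (z s p (other p))) /\
  ~ (forall s p, z s p (other p) = 0) /\
  (forall s, z s Bi Bj + z s Bj Bi <= 1) /\
  (forall s p, z s p (other p) = 1 -> precedes c l s p (other p)) /\
  (forall s, z s Bi Bj = 0 -> z s Bj Bi = 0 ->
     not_precedes c l s Bi Bj /\ not_precedes c l s Bj Bi).

Definition in_F (L : dir -> R) (lb : box -> dir -> R) (c l : box -> dir -> R)
    (z : dir -> box -> box -> R) : Prop :=
  (forall s p, let q := other p in
     l p s / 2 + lb q s * z s q p <= c p s /\
     c p s <= L s - l p s / 2 - lb q s * z s p q) /\
  (forall s p, let q := other p in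
     c p s + l p s / 2 <= c q s - l q s / 2 + L s * (1 - z s p q)) /\
  (forall s p, l p s >= lb p s) /\
  (z DX Bi Bj + z DX Bj Bi + z DY Bi Bj + z DY Bj Bi >= 1) /\
  (forall s, z s Bi Bj + z s Bj Bi <= 1) /\
  (forall s p, is_binary (z s p (other p))) /\
  (forall s p, let q := other p in
     c p s + l p s / 2 + L s * z s p q >=
     c q s - l q s / 2 + (lb p s + lb q s) * (z s Bi Bj + z s Bj Bi)).

(* Both descriptions split into a condition on the binary vector z and, for
   each direction s, a condition on the s-coordinates alone; the only global
   requirement, "z is not identically zero", reads "sum of z >= 1" for binary z.
   In a fixed direction a binary z with z_ij + z_ji <= 1 selects one of three
   cases (B_i before B_j, B_j before B_i, or neither), and in each case the
   big-M constraints with the corresponding z substituted reduce to the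
   disjunct of D^8 plus consequences of both boxes lying in the container:
   a precedence pushes each box by at least lb of the other away from the
   wall, the gap between two boxes never exceeds L, and it never falls below
   lb_p + lb_q - L. *)
From Stdlib Require Import Reals Lra.
Open Scope R_scope.

Lemma is_binary_ge0 (x : R) : is_binary x -> 0 <= x.
Proof. intros [-> | ->]; lra. Qed.

Ltac split_boxes :=
  repeat match goal with
  | |- forall _ : box, _ => intros []
  | |- let _ := _ in _ => cbv zeta
  | |- _ /\ _ => split
  end; simpl.

Section OneDirection.

Variables (L : dir -> R) (lb c l : box -> dir -> R).
Variables (z : dir -> box -> box -> R) (s : dir).

Definition in_container (k : box) : Prop :=
  l k s / 2 <= c k s /\ c k s <= L s - l k s / 2 /\ l k s >= lb k s.

Lemma precedes_container_bounds (p q : box) :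
  in_container p -> in_container q -> precedes c l s p q ->
  c p s <= L s - l p s / 2 - lb q s /\ l q s / 2 + lb p s <= c q s.
Proof. unfold in_container, precedes; lra. Qed.

Lemma container_gap_le (p q : box) :
  in_container p -> in_container q ->
  c p s + l p s / 2 <= c q s - l q s / 2 + L s.
Proof. unfold in_container; lra. Qed.

Lemma container_gap_ge (p q : box) :
  in_container p -> in_container q ->
  c q s - l q s / 2 + (lb p s + lb q s) <= c p s + l p s / 2 + L s.
Proof. unfold in_container; lra. Qed.

Definition in_E_dir : Prop :=
  (forall k, in_container k) /\
  z s Bi Bj + z s Bj Bi <= 1 /\
  (forall p, z s p (other p) = 1 -> precedes c l s p (other p)) /\
  (z s Bi Bj = 0 -> z s Bj Bi = 0 ->
     not_precedes c l s Bi Bj /\ not_precedes c l s Bj Bi).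

Definition in_F_dir : Prop :=
  (forall p, let q := other p in
     l p s / 2 + lb q s * z s q p <= c p s /\
     c p s <= L s - l p s / 2 - lb q s * z s p q) /\
  (forall p, let q := other p in
     c p s + l p s / 2 <= c q s - l q s / 2 + L s * (1 - z s p q)) /\
  (forall p, l p s >= lb p s) /\
  z s Bi Bj + z s Bj Bi <= 1 /\
  (forall p, let q := other p in
     c p s + l p s / 2 + L s * z s p q >=
     c q s - l q s / 2 + (lb p s + lb q s) * (z s Bi Bj + z s Bj Bi)).

Lemma in_E_dir_in_F_dir :
  (forall p, is_binary (z s p (other p))) -> in_E_dir -> in_F_dir.
Proof.
  intros Hbin [Hfit [Hsum [Hprec Hnot]]].
  pose proof (Hfit Bi) as Fi; pose proof (Hfit Bj) as Fj.
  pose proof (container_gap_le _ _ Fi Fj); pose proof (container_gap_le _ _ Fj Fi).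
  pose proof (container_gap_ge _ _ Fi Fj); pose proof (container_gap_ge _ _ Fj Fi).
  destruct (Hbin Bi) as [a | a]; destruct (Hbin Bj) as [b | b];
    simpl in a, b; unfold in_F_dir; rewrite a, b in Hsum |- *; try lra.
  - destruct (Hnot a b); unfold in_container, not_precedes in *.
    split_boxes; rewrite ?a, ?b; lra.
  - pose proof (Hprec Bj b) as Hprecji; simpl in Hprecji.
    pose proof (precedes_container_bounds _ _ Fj Fi Hprecji).
    unfold in_container, precedes in *.
    split_boxes; rewrite ?a, ?b; lra.
  - pose proof (Hprec Bi a) as Hprecij; simpl in Hprecij.
    pose proof (precedes_container_bounds _ _ Fi Fj Hprecij).
    unfold in_container, precedes in *.
    split_boxes; rewrite ?a, ?b; lra.
Qed.

Lemma in_F_dir_in_E_dir :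
  (forall k, 0 <= lb k s) -> (forall p, is_binary (z s p (other p))) ->
  in_F_dir -> in_E_dir.
Proof.
  intros Hlb Hbin [Hbounds [HbigM [Hlen [Hsum HbigM']]]].
  pose proof (Hlb Bi); pose proof (Hlb Bj).
  pose proof (Hbounds Bi); pose proof (Hbounds Bj); simpl in *.
  pose proof (HbigM Bi); pose proof (HbigM Bj); simpl in *.
  pose proof (HbigM' Bi); pose proof (HbigM' Bj); simpl in *.
  pose proof (Hlen Bi); pose proof (Hlen Bj).
  destruct (Hbin Bi) as [a | a]; destruct (Hbin Bj) as [b | b];
    simpl in a, b; rewrite ?a, ?b in *;
    unfold in_E_dir, in_container, precedes, not_precedes;
    split_boxes; rewrite ?a, ?b; lra.
Qed.

Lemma in_E_dir_iff_in_F_dir :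
  (forall k, 0 <= lb k s) -> (forall p, is_binary (z s p (other p))) ->
  in_E_dir <-> in_F_dir.
Proof.
  intros Hlb Hbin; split;
    [apply in_E_dir_in_F_dir | apply in_F_dir_in_E_dir]; assumption.
Qed.

End OneDirection.

Lemma not_all_zero_iff_sum_ge1 (z : dir -> box -> box -> R) :
  (forall s p, is_binary (z s p (other p))) ->
  ~ (forall s p, z s p (other p) = 0) <->
  z DX Bi Bj + z DX Bj Bi + z DY Bi Bj + z DY Bj Bi >= 1.
Proof.
  intros Hbin.
  pose proof (is_binary_ge0 _ (Hbin DX Bi)); pose proof (is_binary_ge0 _ (Hbin DX Bj)).
  pose proof (is_binary_ge0 _ (Hbin DY Bi)); pose proof (is_binary_ge0 _ (Hbin DY Bj)).
  simpl in *; split.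
  - intros Hnz; apply Rnot_lt_ge; intros Hlt; apply Hnz.
    intros s p; destruct (Hbin s p) as [-> | Hone]; [reflexivity |].
    exfalso; destruct s, p; simpl in Hone; lra.
  - intros Hge Hall.
    pose proof (Hall DX Bi); pose proof (Hall DX Bj).
    pose proof (Hall DY Bi); pose proof (Hall DY Bj); simpl in *; lra.
Qed.

Lemma in_E_split (L : dir -> R) (lb c l : box -> dir -> R)
    (z : dir -> box -> box -> R) :
  in_E L lb c l z <->
  (forall s p, is_binary (z s p (other p))) /\
  ~ (forall s p, z s p (other p) = 0) /\
  (forall s, in_E_dir L lb c l z s).
Proof.
  split.
  - intros (HQ & Hbin & Hnz & Hsum & Hprec & Hnot).
    split; [exact Hbin | split; [exact Hnz |]].
    intros s; exact (conj (fun k => HQ s k) (conj (Hsum s) (conj (Hprec s) (Hnot s)))).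
  - intros (Hbin & Hnz & Hdir).
    split; [| split; [exact Hbin | split; [exact Hnz | split; [| split]]]];
      intros s; destruct (Hdir s) as (Hfit & Hsum & Hprec & Hnot); auto.
Qed.

Lemma in_F_split (L : dir -> R) (lb c l : box -> dir -> R)
    (z : dir -> box -> box -> R) :
  in_F L lb c l z <->
  (forall s p, is_binary (z s p (other p))) /\
  z DX Bi Bj + z DX Bj Bi + z DY Bi Bj + z DY Bj Bi >= 1 /\
  (forall s, in_F_dir L lb c l z s).
Proof.
  split.
  - intros (Hbounds & HbigM & Hlen & Hnz & Hsum & Hbin & HbigM').
    split; [exact Hbin | split; [exact Hnz |]].
    intros s; exact (conj (Hbounds s) (conj (HbigM s) (conj (Hlen s) (conj (Hsum s) (HbigM' s))))).
  - intros (Hbin & Hnz & Hdir).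
    split; [| split; [| split; [| split; [exact Hnz | split; [| split; [exact Hbin |]]]]]];
      intros s; destruct (Hdir s) as (Hbounds & HbigM & Hlen & Hsum & HbigM'); auto.
Qed.

Theorem proposition5p4 (L : dir -> R) (lb : box -> dir -> R)
    (HL : forall s, 0 < L s) (Hlb : forall k s, 0 < lb k s) :
  forall (c l : box -> dir -> R) (z : dir -> box -> box -> R),
    in_E L lb c l z <-> in_F L lb c l z.
Proof.
  intros c l z.
  rewrite in_E_split, in_F_split.
  split; intros (Hbin & Hnz & Hdir); (split; [exact Hbin | split]).
  - apply not_all_zero_iff_sum_ge1; assumption.
  - intros s; apply in_E_dir_iff_in_F_dir; auto using Rlt_le.
  - apply not_all_zero_iff_sum_ge1; assumption.
  - intros s; apply in_E_dir_iff_in_F_dir; auto using Rlt_le.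
Qed.
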